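(* Let $p$ be a prime and $n,k$ positive integers with $(p,k-1)=1$ and $n=\mathrm{ind}_p(k)$; let $G=G(p,n,k)=\langle a,b;\ a^p=1,\ b^n=1,\ b^{-1}ab=a^k\rangle$ and let $S\subseteq\mathbb{Z}_p$ be a base. Then $\Sigma_G(S)$ is complete.
   Context: $\mathrm{ind}_p(k)$ is the least positive integer $d$ with $k^d\equiv 1\pmod p$. Elements of $G$ are written uniquely as $a^ib^j$, $i\in\mathbb{Z}_p$, $j\in\mathbb{Z}_n$; $k_t=k^t-1\pmod p$. Maps are written on the right and composed left to right. For $x,y\in\mathbb{Z}_p$, $\mu(x,y):G\to G$ is $(a^ib^j)\mu(x,y)=a^{xik^j-yk_j}$, and $C(x,y)=\{\mu(x,yz):z\in\mathbb{Z}_p\}$. For $S\subseteq\mathbb{Z}_p$, $I(S)$ is the set of invertible elements of $S$ and $S^*$ is the multiplicative subsemigroup of $\mathbb{Z}_p$ generated by $S$. A base is $S\subseteq \mathbb{Z}_p$ with $0\in S$ and $I(S)\ne\varnothing$. $\Sigma_G(S)$ is the semigroup under composition generated by $\{\mu(s,z):s\in S,z\in\mathbb{Z}_p\}$. For $x\in S^*$, $Y(x)=\{s^*z: s^*\in S^*, z\in\mathbb{Z}_p, \exists s\in S,\ x\equiv ss^*\}$, $\mathcal{F}_G(x,S)=\{C(x,y):y\in Y(x)\}$; this family is complete if $C(x,1)\in\mathcal{F}_G(x,S)$, and $\Sigma_G(S)$ is complete if every $x$-family ($x\in S^*$) is complete. *)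

From HB Require Import structures.
From mathcomp Require Import all_boot all_order all_algebra.
Set Implicit Arguments. Unset Strict Implicit. Unset Printing Implicit Defensive.
Import GRing.Theory.
Local Open Scope ring_scope.

Definition is_ind (p k n : nat) : Prop :=
  [/\ (0 < n)%N, (k ^ n = 1 %[mod p])%N &
      forall d : nat, (0 < d)%N -> (d < n)%N -> (k ^ d <> 1 %[mod p])%N].

(* Elements of G = G(p,n,k) written in normal form a^i b^j,
   i in Z_p, j in Z_n : the pair (i, j). *)
Definition Gel (p n : nat) := ('F_p * 'I_n)%type.

Definition ord0_of (n : nat) (j : 'I_n) : 'I_n :=
  Ordinal (leq_ltn_trans (leq0n j) (ltn_ord j)).

Definition kt (p k t : nat) : 'F_p := (k%:R) ^+ t - 1.

Definition mu (p n k : nat) (x y : 'F_p) : {ffun Gel p n -> Gel p n} :=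
  [ffun g : Gel p n => (x * g.1 * (k%:R) ^+ g.2 - y * kt p k g.2, ord0_of g.2)].

Definition Cset (p n k : nat) (x y : 'F_p) : {set {ffun Gel p n -> Gel p n}} :=
  [set mu n k x (y * z) | z : 'F_p].

Definition Iset (p : nat) (S : {set 'F_p}) : {set 'F_p} :=
  [set s in S | s \is a GRing.unit].

Definition is_base (p : nat) (S : {set 'F_p}) : Prop :=
  (0 \in S) /\ Iset S != set0.

Definition in_semigrp (p : nat) (S : {set 'F_p}) (x : 'F_p) : Prop :=
  exists s : seq 'F_p, [/\ s != [::], all (fun t => t \in S) s &
                           x = \prod_(t <- s) t].

Definition in_Y (p : nat) (S : {set 'F_p}) (x y : 'F_p) : Prop :=
  exists sst : 'F_p, exists z : 'F_p,
    [/\ in_semigrp S sst, y = sst * z & exists2 s, s \in S & x = s * sst].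

(* the x-family F_G(x,S) = { C(x,y) : y in Y(x) } is complete iff
   C(x,1) belongs to it *)
Definition family_complete (p n k : nat) (S : {set 'F_p}) (x : 'F_p) : Prop :=
  exists y : 'F_p, in_Y S x y /\ Cset n k x y = Cset n k x 1.

Definition Sigma_complete (p n k : nat) (S : {set 'F_p}) : Prop :=
  forall x : 'F_p, in_semigrp S x -> family_complete n k S x.

(* Since Z_p is a field, rescaling the parameter z shows C(x, y) = C(x, 1)
   for every y <> 0, so it suffices to find a nonzero y in Y(x).  For x = 0
   take s = 0 and s^* an invertible element u of S.  Otherwise write
   x = s s^* with s in S and s^* in S^*; this is possible even when x is a
   single element of S, because 1 = u^(p-1) lies in S^*.  Then y = s^* is
   nonzero. *)

From mathcomp Require Import all_boot all_order all_algebra all_field.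
Set Implicit Arguments.
Unset Strict Implicit.
Unset Printing Implicit Defensive.
Import GRing.Theory.
Local Open Scope ring_scope.

Lemma expf_card_pred (F : finFieldType) (u : F) : u != 0 -> u ^+ #|F|.-1 = 1.
Proof.
move=> u_neq0; apply: (mulIf u_neq0).
by rewrite mul1r -exprSr prednK ?expf_card // ltnW ?card_finNzRing_gt1.
Qed.

Lemma Cset_eq1 (p n k : nat) (x y : 'F_p) :
  y != 0 -> Cset n k x y = Cset n k x 1.
Proof.
move=> y_neq0; apply/setP => f; apply/imsetP/imsetP => -[z _ ->].
  by exists (y * z); rewrite ?mul1r.
by exists (y^-1 * z); rewrite // mulrA mulfV // !mul1r.
Qed.

Section Semigroup.

Variables (p : nat) (S : {set 'F_p}).

Lemma semigrp_mem s : s \in S -> in_semigrp S s.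
Proof. by move=> sS; exists [:: s]; rewrite /= sS big_seq1. Qed.

Lemma semigrpM x y : in_semigrp S x -> in_semigrp S y -> in_semigrp S (x * y).
Proof.
move=> [l [l_neq0 lS ->]] [r [_ rS ->]]; exists (l ++ r).
by rewrite big_cat all_cat lS rS; case: (l) l_neq0.
Qed.

Lemma semigrpX x m : (0 < m)%N -> in_semigrp S x -> in_semigrp S (x ^+ m).
Proof.
case: m => // m _ Sx; elim: m => [|m IHm]; first by rewrite expr1.
by rewrite exprS; apply: semigrpM.
Qed.

Lemma semigrp1 u : u \in S -> u != 0 -> in_semigrp S 1.
Proof.
move=> uS u_neq0; rewrite -(expf_card_pred u_neq0).
apply: semigrpX; last exact: semigrp_mem.
by rewrite -subn1 subn_gt0 card_finNzRing_gt1.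
Qed.

Lemma semigrp_factor x : in_semigrp S 1 -> in_semigrp S x ->
  exists s t, [/\ s \in S, in_semigrp S t & x = s * t].
Proof.
move=> S1 [l [l_neq0 lS ->]].
case: l l_neq0 lS => [//|s l _ /= /andP[sS lS]]; exists s.
case: l lS => [_|t l tlS]; first by exists 1; rewrite big_seq1 mulr1.
exists (\prod_(v <- t :: l) v); split=> //; first by exists (t :: l).
by rewrite big_cons.
Qed.

Lemma base_nonzero : is_base S -> exists2 u, u \in S & u != 0.
Proof.
by case=> _ /set0Pn[u]; rewrite inE => /andP[uS uU]; exists u; rewrite -?unitfE.
Qed.

Lemma Y_nonzero x : is_base S -> in_semigrp S x -> exists2 y, in_Y S x y & y != 0.
Proof.
move=> baseS Sx; have [u uS u_neq0] := base_nonzero baseS.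
have [->|x_neq0] := eqVneq x 0.
  exists u => //; exists u, 1; rewrite mulr1; split=> //; first exact: semigrp_mem.
  by exists 0; rewrite ?mul0r //; case: baseS.
have [s [t [sS St def_x]]] := semigrp_factor (semigrp1 uS u_neq0) Sx.
exists t; first by exists t, 1; rewrite mulr1; split=> //; exists s.
by apply: contraNneq x_neq0; rewrite def_x => ->; rewrite mulr0.
Qed.

End Semigroup.

Theorem theorem6p1 (p n k : nat) (S : {set 'F_p}) :
  prime p -> (0 < n)%N -> (0 < k)%N -> coprime p (k - 1) -> is_ind p k n ->
  is_base S -> Sigma_complete n k S.
Proof.
move=> _ _ _ _ _ baseS x Sx.
have [y Yy y_neq0] := Y_nonzero baseS Sx.
by exists y; split; last exact: Cset_eq1.
Qed.
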